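(* Let $G$ be a finite group, $S$ a generating set of $G$, and $X \subseteq S$. Assume: (i) $\langle X \rangle$ is abelian and nontrivial; (ii) for each $g \in G$, either $g$ centralizes every element of $\langle X \rangle$, or $g$ inverts every element of $\langle X \rangle$ (i.e., $g^{-1}yg = y^{-1}$ for all $y \in \langle X \rangle$); (iii) $\mathrm{Cay}(\langle X \rangle; X)$ has a hamiltonian cycle; and (iv) $\mathrm{Cay}(G/\langle X \rangle; S)$ has a hamiltonian path. Then $\mathrm{Cay}(G;S)$ has a hamiltonian cycle.
   Context: For a group $G$ and a subset $S \subseteq G$, the Cayley graph $\mathrm{Cay}(G;S)$ has vertex set $G$, with $g$ adjacent to $gs$ for every $g \in G$ and $s \in S \cup S^{-1}$. Hypothesis (ii) implies $\langle X \rangle$ is normal in $G$; $\mathrm{Cay}(G/\langle X \rangle;S)$ denotes the Cayley graph of the quotient group with respect to the image of $S$. A hamiltonian path visits every vertex exactly once. *)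

From mathcomp Require Import all_boot all_fingroup.
Set Implicit Arguments. Unset Strict Implicit. Unset Printing Implicit Defensive.
Local Open Scope group_scope.

Definition cay_adj (T : finGroupType) (S : {set T}) : rel T :=
  fun g h => [exists s in S, (h == g * s) || (h == g * s^-1)].

Definition ham_cycle (T : finType) (e : rel T) (V : {set T}) : Prop :=
  exists c : seq T, [/\ uniq c, c =i V & path.cycle e c].

Definition ham_path (T : finType) (e : rel T) (V : {set T}) : Prop :=
  exists (x : T) (p : seq T), [/\ uniq (x :: p), (x :: p) =i V & path e x p].

From mathcomp Require Import all_boot all_fingroup.
Set Implicit Arguments. Unset Strict Implicit. Unset Printing Implicit Defensive.

(* Write H = <X>.  Every g in G centralises or inverts H, so right
   multiplication by g maps an X-edge h -- h x^(+-1) to the S-edge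
   h g -- h g (x^g)^(+-1): each right coset H g carries a copy of the
   hamiltonian cycle of Cay(H; X).  Lifting the hamiltonian path of
   Cay(G/H; S) gives g_0, ..., g_k with consecutive g_i adjacent in Cay(G; S),
   and then h g_i -- h g_(i+1) is an S-edge for every h.  The cosets thus form
   a prism over the cycle a :: r; a hamiltonian cycle of the prism runs
   through r in every coset, alternating direction, and returns along
   a g_k, ..., a g_0. *)

Lemma head_map (T1 T2 : Type) (g : T1 -> T2) x s :
  head (g x) (map g s) = g (head x s).
Proof. by case: s. Qed.

Section Snake.

Variables (L T : eqType) (e : rel T) (f : L -> T -> T) (a : T).

Fixpoint snake (ls : seq L) (r : seq T) : seq T :=
  if ls is l :: ls' then map (f l) r ++ snake ls' (rev r) ++ [:: f l a]
  else [::].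

Lemma size_snake ls r : size (snake ls r) = size ls * (size r).+1.
Proof.
elim: ls r => //= l ls IH r.
by rewrite !size_cat size_map IH size_rev /= mulSn addn1 addnS.
Qed.

Lemma mem_snake ls r z :
  (z \in snake ls r) = has (fun l => z \in map (f l) (a :: r)) ls.
Proof.
elim: ls r => //= l ls IH r.
rewrite !mem_cat IH mem_seq1 inE.
have -> : has (fun l => z \in map (f l) (a :: rev r)) ls
        = has (fun l => z \in map (f l) (a :: r)) ls.
  by apply: eq_has => l'; rewrite /= !inE map_rev mem_rev.
by case: (z == f l a); case: (z \in map _ _); case: has; rewrite ?orbT.
Qed.

Hypothesis e_sym : symmetric e.

Lemma cycle_cons_rev x s : path.cycle e (x :: s) -> path.cycle e (x :: rev s).
Proof.
move=> cyc; have : path.cycle e (rev (x :: s)).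
  by rewrite rev_cycle (eq_cycle (e' := e)) // => y z; rewrite e_sym.
by rewrite rev_cons -(rotr_cycle 1) rotr1_rcons.
Qed.

Lemma path_cycle_behead x s y :
  path.cycle e (x :: s) -> e y (head x s) -> path e y s && e (last y s) x.
Proof.
case: s => [|z s] /=; first by rewrite andbT => _ ->.
by rewrite rcons_path => /and3P[_ -> ->] ->.
Qed.

Variable rung : rel L.
Hypothesis rung_edge : forall l l' h, rung l l' -> e (f l h) (f l' h).

Lemma snake_path l ls r y :
  r != [::] -> {in l :: ls, forall l, path.cycle e (map (f l) (a :: r))} ->
  path rung l ls -> e y (f l (head a r)) ->
  path e y (snake (l :: ls) r) && (last y (snake (l :: ls) r) == f l a).
Proof.
elim: ls l r y => [|l' ls IH] l r y r_ne layers lls ey.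
all: have cyc_l : path.cycle e (f l a :: map (f l) r) := layers l (mem_head _ _).
all: have /andP[pl el] : path e y (map (f l) r) && e (last y (map (f l) r)) (f l a)
  by apply: path_cycle_behead cyc_l _; rewrite head_map.
  by rewrite /= cats1 rcons_path last_rcons pl el eqxx.
case/andP: lls => ll' lls.
case/lastP: r r_ne layers ey cyc_l pl el => // r z _ layers _ _ pl _.
have layers' : {in l' :: ls, forall l,
    path.cycle e (map (f l) (a :: rev (rcons r z)))}.
  move=> l0 l0_in; rewrite /= map_rev; apply: cycle_cons_rev.
  by apply: (layers l0); rewrite inE l0_in orbT.
have := IH l' _ (f l z) _ layers' lls.
rewrite rev_rcons => /(_ isT (rung_edge z ll')) /andP[pr /eqP lastr].
have -> : snake [:: l, l' & ls] (rcons r z) =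
  map (f l) (rcons r z) ++ snake (l' :: ls) (z :: rev r) ++ [:: f l a].
  by rewrite /= rev_rcons.
move: pr lastr; set s := snake _ _ => pr lastr.
rewrite cats1 cat_path rcons_path last_cat last_rcons eqxx andbT pl.
by rewrite map_rcons last_rcons pr lastr e_sym rung_edge.
Qed.

Lemma snake_cycle l ls r :
  r != [::] -> {in l :: ls, forall l, path.cycle e (map (f l) (a :: r))} ->
  path rung l ls -> path.cycle e (snake (l :: ls) r).
Proof.
move=> r_ne layers lls.
have cyc_l : path.cycle e (f l a :: map (f l) r) := layers l (mem_head _ _).
have a_r : e (f l a) (f l (head a r)).
  by case: r r_ne layers cyc_l => // z r _ _ /andP[].
have /andP[p /eqP lastp] := snake_path r_ne layers lls a_r.
by rewrite (cycle_path (f l a)) lastp.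
Qed.

End Snake.

Local Open Scope group_scope.

Section CayleyGraph.

Variable gT : finGroupType.
Implicit Types (S X : {set gT}) (g x y : gT).

Lemma cay_adj_sym S : symmetric (cay_adj S).
Proof.
have adj_sym x y : cay_adj S x y -> cay_adj S y x.
  case/existsP=> s /andP[Ss /orP[]] /eqP->; apply/existsP; exists s;
  by rewrite Ss ?mulgK ?mulgKV eqxx ?orbT.
by move=> x y; apply/idP/idP; apply: adj_sym.
Qed.

Lemma cay_adjS X S : X \subset S -> subrel (cay_adj X) (cay_adj S).
Proof.
move=> sXS x y /existsP[s /andP[Xs adj]]; apply/existsP; exists s.
by rewrite (subsetP sXS).
Qed.

Lemma cay_adjMl S g x y : cay_adj S (g * x) (g * y) = cay_adj S x y.
Proof. by apply: eq_existsb => s; rewrite -!mulgA !(inj_eq (mulgI g)). Qed.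

Lemma cay_adjMr X g x y :
    {in X, forall s, s ^ g = s \/ s ^ g = s^-1} ->
  cay_adj X x y -> cay_adj X (x * g) (y * g).
Proof.
move=> conjX /existsP[s /andP[Xs adj_xy]]; apply/existsP; exists s.
rewrite Xs; case/orP: adj_xy => /eqP->; rewrite -mulgA (conjgC _ g) ?conjVg;
by case: (conjX s Xs) => ->; rewrite ?invgK mulgA eqxx ?orbT.
Qed.

Lemma norms_conj_or_inv (G H : {group gT}) :
  {in G, forall g, {in H, forall y, y ^ g = y \/ y ^ g = y^-1}} ->
  G \subset 'N(H).
Proof.
move=> conjH; apply/subsetP => g Gg; rewrite inE.
apply/subsetP => _ /imsetP[y Hy ->].
by case: (conjH g Gg y Hy) => ->; rewrite ?groupV.
Qed.

Lemma map_mulg_rcoset (A : {set gT}) (c : seq gT) g :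
  c =i A -> [seq h * g | h <- c] =i A :* g.
Proof.
by move=> cA z; rewrite mem_rcoset -cA -{1}(mulgKV g z) (mem_map (mulIg g)).
Qed.

Lemma lift_quotient_path (G H : {group gT}) S g p :
    S \subset G -> G \subset 'N(H) -> g \in G ->
    path (cay_adj (coset H @: S)) (coset H g) p ->
  exists gs,
    [/\ map (coset H) gs = p, {subset gs <= G} & path (cay_adj S) g gs].
Proof.
move=> sSG nHG; elim: p g => [|q p IH] g Gg /=; first by exists [::].
case/andP=> /existsP[_ /andP[/imsetP[s Ss ->] gq]] qp.
have Gs := subsetP sSG s Ss; have Ns := subsetP nHG s Gs.
have Ng := subsetP nHG g Gg.
have [t [Gt gt q_gt]] :
    exists t, [/\ t \in G, cay_adj S g (g * t) & q = coset H (g * t)].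
  case/orP: gq => /eqP->; [exists s | exists s^-1];
    rewrite ?groupV ?morphM ?morphV ?groupV //;
    by split=> //; apply/existsP; exists s; rewrite Ss eqxx ?orbT.
have := IH (g * t) (groupM Gg Gt); rewrite -q_gt => /(_ qp)[gs [gsp gsG gs_path]].
exists (g * t :: gs); split; first by rewrite /= gsp q_gt.
  by move=> x; rewrite inE => /predU1P[->|/gsG //]; rewrite groupM.
by rewrite /= gt.
Qed.

Lemma has_rcoset_quotient (G H : {group gT}) gs z :
    H \subset G -> G \subset 'N(H) -> {subset gs <= G} ->
    map (coset H) gs =i G / H ->
  has (fun g => z \in H :* g) gs = (z \in G).
Proof.
move=> sHG nHG gsG gsQ; apply/hasP/idP => [[g /gsG Gg]|Gz].
  rewrite mem_rcoset => Hzg.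
  by rewrite -(mulgKV g z) groupM // (subsetP sHG).
have : coset H z \in map (coset H) gs by rewrite gsQ mem_quotient.
case/mapP=> g gs_g zg; exists g => //.
have Ng := subsetP nHG g (gsG g gs_g); have Nz := subsetP nHG z Gz.
by rewrite -(val_coset Ng) -zg val_coset // rcoset_refl.
Qed.

Lemma snake_rcosets (G H : {group gT}) a r ls :
    H \subset G -> G \subset 'N(H) -> uniq (a :: r) -> a :: r =i H ->
    {subset ls <= G} -> uniq (map (coset H) ls) -> map (coset H) ls =i G / H ->
  uniq (snake (fun g h => h * g) a ls r) /\
  snake (fun g h => h * g) a ls r =i G.
Proof.
move=> sHG nHG ar_uniq arH lsG ls_uniq lsQ.
have memG : snake (fun g h => h * g) a ls r =i G.
  move=> x; rewrite mem_snake -(has_rcoset_quotient x sHG nHG lsG lsQ).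
  by apply: eq_has => g; rewrite /= (map_mulg_rcoset _ arH).
split=> //; apply/card_uniqP; rewrite (eq_card memG) size_snake.
rewrite -[(size r).+1]/(size (a :: r)) -(card_uniqP ar_uniq) (eq_card arH).
rewrite -(size_map (coset H)) -(card_uniqP ls_uniq) (eq_card lsQ).
by rewrite card_quotient // mulnC Lagrange.
Qed.

End CayleyGraph.

Theorem mainTheorem3 (gT : finGroupType) (G : {group gT}) (S X : {set gT})
  (sSG : S \subset G) (genS : <<S>> = G) (sXS : X \subset S)
  (abX : abelian <<X>>) (ntX : <<X>> != 1)
  (cjX : forall g, g \in G ->
     (forall y, y \in <<X>> -> commute g y) \/
     (forall y, y \in <<X>> -> y ^ g = y^-1))
  (hcX : ham_cycle (cay_adj X) <<X>>)
  (hpQ : ham_path (cay_adj (coset <<X>> @: S)) (G / <<X>>)) :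
  ham_cycle (cay_adj S) G.
Proof.
have sHG : <<X>> \subset G by rewrite gen_subG (subset_trans sXS sSG).
have conjH : {in G, forall g, {in <<X>>, forall y, y ^ g = y \/ y ^ g = y^-1}}.
  move=> g /cjX[cgH y Hy | igH y Hy]; [left | by right; apply: igH].
  by rewrite conjgE -(cgH y Hy) mulKg.
have nHG := norms_conj_or_inv conjH.
case: hcX => c [c_uniq cH c_cycle].
have := ntX; rewrite -cardG_gt1 -(eq_card cH) (card_uniqP c_uniq).
case: c c_uniq cH c_cycle => [|a [|z r]] // c_uniq cH c_cycle _.
case: hpQ => q0 [p [qp_uniq qpQ qp_path]].
have /morphimP[g0 _ Gg0 q0E] : q0 \in G / <<X>> by rewrite -qpQ mem_head.
rewrite q0E in qp_uniq qpQ qp_path.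
have [gs [gsp gsG gs_path]] := lift_quotient_path sSG nHG Gg0 qp_path.
have layersG : {subset g0 :: gs <= G}.
  by move=> g; rewrite inE => /predU1P[->|/gsG].
have gsE : map (coset <<X>>) (g0 :: gs) = coset <<X>> g0 :: p by rewrite /= gsp.
rewrite -gsE in qp_uniq qpQ.
have [ham_uniq hamG] := snake_rcosets sHG nHG c_uniq cH layersG qp_uniq qpQ.
exists (snake (fun g h => h * g) a (g0 :: gs) (z :: r)); split=> //.
apply: (snake_cycle (cay_adj_sym S) (rung := cay_adj S)) => //.
  by move=> g g' h; rewrite cay_adjMl.
move=> g /layersG Gg; apply: homo_cycle c_cycle => x y.
by move/(cay_adjMr (sub_in1 (subsetP (subset_gen X)) (conjH g Gg)))/(cay_adjS sXS).
Qed.
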